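(* Let $\mathsf L$ be an intermediate logic with $\mathsf{ND}\subseteq\mathsf L$, and let $\phi$ be a consistent formula. The following are equivalent: (i) $\vdash_{\mathsf L^\neg}\phi\leftrightarrow\neg\neg\phi$; (ii) $\phi$ is $\mathcal{ST}$-projective in $\mathsf L^\neg$, where $\mathcal{ST}$ is the class of all substitutions stable in $\mathsf L^\neg$.
   Context: Formulas are built from propositional variables, $\bot,\top$ with $\wedge,\vee,\to$; $\neg\phi:=\phi\to\bot$. An intermediate theory is a set $\mathsf T$ of formulas closed under modus ponens with $\mathsf{IPC}\subseteq\mathsf T\subseteq\mathsf{CPC}$; an intermediate logic is an intermediate theory closed under uniform substitution. $\Gamma\vdash_{\mathsf T}\phi$ means $\phi$ is derivable from $\Gamma\cup\mathsf T$ by modus ponens; $\vdash_{\mathsf T}\phi$ means $\phi\in\mathsf T$. $\mathsf{ND}$ is the intermediate logic axiomatized over $\mathsf{IPC}$ by all substitution instances of $(\neg p\to\bigvee_{i=1}^k\neg q_i)\to\bigvee_{i=1}^k(\neg p\to\neg q_i)$ for $k\ge1$. For an intermediate logic $\mathsf L$, $\phi^\neg$ is obtained by replacing each propositional variable $p$ in $\phi$ by $\neg p$, and $\mathsf L^\neg=\{\phi\mid\phi^\neg\in\mathsf L\}$. A substitution is a map on formulas commuting with connectives and constants; it is stable in $\mathsf L^\neg$ if $\vdash_{\mathsf L^\neg}\sigma(p)\leftrightarrow\neg\neg\sigma(p)$ for all variables $p$. $\phi$ is consistent if $\phi\nvdash_{\mathsf L^\neg}\bot$. For a set $\mathcal S$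 of substitutions, $\phi$ is $\mathcal S$-projective in $\mathsf L^\neg$ if there is $\sigma\in\mathcal S$ with $\vdash_{\mathsf L^\neg}\sigma(\phi)$, and $\phi,\sigma(p)\vdash_{\mathsf L^\neg}p$ and $\phi,p\vdash_{\mathsf L^\neg}\sigma(p)$ for all variables $p$. *)

From Stdlib Require Import List.
Import ListNotations.

Inductive form : Type :=
| Var : nat -> form
| Bot : form
| Top : form
| And : form -> form -> form
| Or  : form -> form -> form
| Imp : form -> form -> form.

Definition Neg (a : form) : form := Imp a Bot.
Definition Iff (a b : form) : form := And (Imp a b) (Imp b a).

Fixpoint subst (s : nat -> form) (f : form) : form :=
  match f with
  | Var p => s p
  | Bot => Bot
  | Top => Top
  | And a b => And (subst s a) (subst s b)
  | Or a b => Or (subst s a) (subst s b)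
  | Imp a b => Imp (subst s a) (subst s b)
  end.

Inductive IPC : form -> Prop :=
| ipc_K  a b   : IPC (Imp a (Imp b a))
| ipc_S  a b c : IPC (Imp (Imp a (Imp b c)) (Imp (Imp a b) (Imp a c)))
| ipc_A1 a b   : IPC (Imp (And a b) a)
| ipc_A2 a b   : IPC (Imp (And a b) b)
| ipc_A3 a b   : IPC (Imp a (Imp b (And a b)))
| ipc_O1 a b   : IPC (Imp a (Or a b))
| ipc_O2 a b   : IPC (Imp b (Or a b))
| ipc_O3 a b c : IPC (Imp (Imp a c) (Imp (Imp b c) (Imp (Or a b) c)))
| ipc_EF a     : IPC (Imp Bot a)
| ipc_T        : IPC Top
| ipc_MP a b   : IPC (Imp a b) -> IPC a -> IPC b.

Fixpoint eval (v : nat -> bool) (f : form) : bool :=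
  match f with
  | Var p => v p
  | Bot => false
  | Top => true
  | And a b => andb (eval v a) (eval v b)
  | Or a b => orb (eval v a) (eval v b)
  | Imp a b => orb (negb (eval v a)) (eval v b)
  end.

Definition CPC (f : form) : Prop := forall v, eval v f = true.

Definition MP_closed (T : form -> Prop) : Prop :=
  forall a b, T (Imp a b) -> T a -> T b.

Definition intermediate_theory (T : form -> Prop) : Prop :=
  MP_closed T /\ (forall f, IPC f -> T f) /\ (forall f, T f -> CPC f).

Definition intermediate_logic (L : form -> Prop) : Prop :=
  intermediate_theory L /\ (forall s f, L f -> L (subst s f)).

Fixpoint bigOr (l : list form) : form :=
  match l with
  | [] => Bot
  | [x] => x
  | x :: xs => Or x (bigOr xs)
  end.

(** The ND_k axiom, k >= 1, with p := Var 0 and q_i := Var i (1 <= i <= k):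
    (~p -> \/_{i=1}^k ~q_i) -> \/_{i=1}^k (~p -> ~q_i). *)
Definition ND_axiom (k : nat) : form :=
  let qs := map Var (seq 1 k) in
  Imp (Imp (Neg (Var 0)) (bigOr (map Neg qs)))
      (bigOr (map (fun q => Imp (Neg (Var 0)) (Neg q)) qs)).

Inductive ND : form -> Prop :=
| nd_ipc f : IPC f -> ND f
| nd_ax (k : nat) (s : nat -> form) : 1 <= k -> ND (subst s (ND_axiom k))
| nd_MP a b : ND (Imp a b) -> ND a -> ND b.

Definition negsub (f : form) : form := subst (fun p => Neg (Var p)) f.

Definition Lneg (L : form -> Prop) : form -> Prop := fun f => L (negsub f).

Inductive derives (T : form -> Prop) (G : list form) : form -> Prop :=
| der_hyp f : In f G -> derives T G f
| der_thm f : T f -> derives T G f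
| der_MP a b : derives T G (Imp a b) -> derives T G a -> derives T G b.

Definition stable (L : form -> Prop) (s : nat -> form) : Prop :=
  forall p, Lneg L (Iff (s p) (Neg (Neg (s p)))).

Definition consistent (L : form -> Prop) (f : form) : Prop :=
  ~ derives (Lneg L) [f] Bot.

Definition projective (L : form -> Prop) (S : (nat -> form) -> Prop) (f : form) : Prop :=
  exists s, S s /\ Lneg L (subst s f) /\
    (forall p, derives (Lneg L) [f; s p] (Var p)) /\
    (forall p, derives (Lneg L) [f; Var p] (s p)).

From Stdlib Require Import List Arith Lia Classical.
Import ListNotations.

(* (i) => (ii): a consistent phi is classically satisfied by some valuation v,
   since otherwise, by a Kalmar-style elimination of variables, ~phi is
   already intuitionistically provable.  Take s(p) := (phi -> p) /\ (~phi -> v(p)).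
   Variables are stable in L^neg (p^neg = ~p), hence so is every s(p).  Under
   phi, s is equivalent to the identity and under ~phi to the constant
   substitution v, so s(phi) follows from phi and from ~phi, hence ~~s(phi)
   is provable; and s(phi) is stable because substituting stable formulas into
   a stable formula keeps it stable (L is closed under substitution).
   (ii) => (i): s(p) and p are stable and equivalent under phi, hence already
   under ~~phi; so ~~phi proves s(phi) <-> phi, and s(phi) is a theorem. *)

Notation stab a := (Iff a (Neg (Neg a))).

Lemma IPC_subst s f : IPC f -> IPC (subst s f).
Proof. induction 1; simpl; try constructor. eapply ipc_MP; eauto. Qed.

Lemma IPC_imp_refl a : IPC (Imp a a).
Proof.
  eapply ipc_MP; [eapply ipc_MP; [apply (ipc_S a (Imp a a) a) | apply ipc_K] | apply (ipc_K a a)].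
Qed.

Lemma subst_subst s t f : subst s (subst t f) = subst (fun p => subst s (t p)) f.
Proof. induction f; simpl; congruence. Qed.

Lemma subst_ext s1 s2 f : (forall p, s1 p = s2 p) -> subst s1 f = subst s2 f.
Proof. intros H; induction f; simpl; congruence. Qed.

Lemma subst_Var f : subst Var f = f.
Proof. induction f; simpl; congruence. Qed.

Fixpoint var_bound (f : form) : nat :=
  match f with
  | Var p => S p
  | Bot | Top => 0
  | And a b | Or a b | Imp a b => Nat.max (var_bound a) (var_bound b)
  end.

Lemma subst_id_below s f : (forall p, p < var_bound f -> s p = Var p) -> subst s f = f.
Proof.
  induction f; simpl; intros H; try reflexivity; try (apply H; lia);
    rewrite IHf1, IHf2; trivial; intros p Hp; apply H; lia.
Qed.

Lemma derives_weaken T G G' f : incl G G' -> derives T G f -> derives T G' f.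
Proof.
  intros Hi; induction 1; [apply der_hyp; auto | apply der_thm; auto | eapply der_MP; eauto].
Qed.

Lemma derives_nil_mem T f : MP_closed T -> derives T [] f -> T f.
Proof.
  intros HM H; remember [] as G; induction H; subst; [destruct H | exact H | eapply HM; eauto].
Qed.

Section Derivations.

Variable T : form -> Prop.
Hypothesis T_IPC : forall f, IPC f -> T f.

Local Ltac by_hyp := apply der_hyp; simpl; repeat (first [left; reflexivity | right]); fail.

Lemma derives_IPC G f : IPC f -> derives T G f.
Proof. intros H; apply der_thm, T_IPC, H. Qed.

Lemma derives_cons G a f : derives T G f -> derives T (a :: G) f.
Proof. apply derives_weaken; intros x Hx; right; exact Hx. Qed.

Lemma derives_of_nil G f : derives T [] f -> derives T G f.
Proof. apply derives_weaken; intros x []. Qed.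

Lemma derives_imp_intro G a b : derives T (a :: G) b -> derives T G (Imp a b).
Proof.
  intros H; remember (a :: G) as G0; induction H; subst.
  - destruct H as [<- | H]; [apply derives_IPC, IPC_imp_refl|].
    apply (der_MP _ _ f); [apply derives_IPC, ipc_K | apply der_hyp, H].
  - apply (der_MP _ _ f); [apply derives_IPC, ipc_K | apply der_thm, H].
  - apply (der_MP _ _ (Imp a a0)); [|apply IHderives2; reflexivity].
    apply (der_MP _ _ (Imp a (Imp a0 b))); [apply derives_IPC, ipc_S | apply IHderives1; reflexivity].
Qed.

Local Ltac imp_intro := apply derives_imp_intro.

Lemma derives_and_intro G a b : derives T G a -> derives T G b -> derives T G (And a b).
Proof. intros Ha Hb; eapply der_MP; [eapply der_MP; [apply derives_IPC, ipc_A3|] |]; eauto. Qed.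

Lemma derives_and_elim1 G a b : derives T G (And a b) -> derives T G a.
Proof. apply der_MP, derives_IPC, ipc_A1. Qed.

Lemma derives_and_elim2 G a b : derives T G (And a b) -> derives T G b.
Proof. apply der_MP, derives_IPC, ipc_A2. Qed.

Lemma derives_or_intro1 G a b : derives T G a -> derives T G (Or a b).
Proof. apply der_MP, derives_IPC, ipc_O1. Qed.

Lemma derives_or_intro2 G a b : derives T G b -> derives T G (Or a b).
Proof. apply der_MP, derives_IPC, ipc_O2. Qed.

Lemma derives_or_elim G a b c :
  derives T G (Or a b) -> derives T (a :: G) c -> derives T (b :: G) c -> derives T G c.
Proof.
  intros Hab Ha Hb.
  apply (der_MP _ _ (Or a b)); [|exact Hab].
  apply (der_MP _ _ (Imp b c)); [|imp_intro; exact Hb].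
  apply (der_MP _ _ (Imp a c)); [apply derives_IPC, ipc_O3 | imp_intro; exact Ha].
Qed.

Lemma derives_bot_elim G a : derives T G Bot -> derives T G a.
Proof. apply der_MP, derives_IPC, ipc_EF. Qed.

Lemma derives_top G : derives T G Top.
Proof. apply derives_IPC, ipc_T. Qed.

Lemma derives_iff_intro G a b :
  derives T (a :: G) b -> derives T (b :: G) a -> derives T G (Iff a b).
Proof. intros Hab Hba; apply derives_and_intro; imp_intro; assumption. Qed.

Lemma derives_iff_refl G a : derives T G (Iff a a).
Proof. apply derives_iff_intro; by_hyp. Qed.

Lemma derives_iff_mp G a b : derives T G (Iff a b) -> derives T G a -> derives T G b.
Proof. intros H; apply der_MP, (derives_and_elim1 _ _ _ H). Qed.

Lemma derives_iff_mpr G a b : derives T G (Iff a b) -> derives T G b -> derives T G a.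
Proof. intros H; apply der_MP, (derives_and_elim2 _ _ _ H). Qed.

Lemma derives_iff_sym G a b : derives T G (Iff a b) -> derives T G (Iff b a).
Proof. intros H; apply derives_and_intro; [eapply derives_and_elim2 | eapply derives_and_elim1]; eauto. Qed.

Lemma derives_iff_hyp_mp a b c : derives T [a] (Iff b c) -> derives T [a; b] c.
Proof.
  intros H; apply (derives_iff_mp _ b); [|by_hyp].
  revert H; apply derives_weaken; intros x [<- | []]; left; reflexivity.
Qed.

Lemma derives_iff_hyp_mpr a b c : derives T [a] (Iff b c) -> derives T [a; c] b.
Proof.
  intros H; apply (derives_iff_mpr _ _ c); [|by_hyp].
  revert H; apply derives_weaken; intros x [<- | []]; left; reflexivity.
Qed.

Lemma derives_and_iff G a a' b b' :
  derives T G (Iff a a') -> derives T G (Iff b b') ->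
  derives T G (Iff (And a b) (And a' b')).
Proof.
  intros Ha Hb; apply derives_iff_intro; apply derives_and_intro.
  - apply (derives_iff_mp _ a); [apply derives_cons, Ha | eapply derives_and_elim1; by_hyp].
  - apply (derives_iff_mp _ b); [apply derives_cons, Hb | eapply derives_and_elim2; by_hyp].
  - apply (derives_iff_mpr _ _ a'); [apply derives_cons, Ha | eapply derives_and_elim1; by_hyp].
  - apply (derives_iff_mpr _ _ b'); [apply derives_cons, Hb | eapply derives_and_elim2; by_hyp].
Qed.

Lemma derives_or_iff G a a' b b' :
  derives T G (Iff a a') -> derives T G (Iff b b') ->
  derives T G (Iff (Or a b) (Or a' b')).
Proof.
  intros Ha Hb; apply derives_iff_intro; (eapply derives_or_elim; [by_hyp | |]).
  - apply derives_or_intro1, (derives_iff_mp _ a); [do 2 apply derives_cons; exact Ha | by_hyp].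
  - apply derives_or_intro2, (derives_iff_mp _ b); [do 2 apply derives_cons; exact Hb | by_hyp].
  - apply derives_or_intro1, (derives_iff_mpr _ _ a'); [do 2 apply derives_cons; exact Ha | by_hyp].
  - apply derives_or_intro2, (derives_iff_mpr _ _ b'); [do 2 apply derives_cons; exact Hb | by_hyp].
Qed.

Lemma derives_imp_iff G a a' b b' :
  derives T G (Iff a a') -> derives T G (Iff b b') ->
  derives T G (Iff (Imp a b) (Imp a' b')).
Proof.
  intros Ha Hb; apply derives_iff_intro; imp_intro.
  - apply (derives_iff_mp _ b); [do 2 apply derives_cons; exact Hb|].
    apply (der_MP _ _ a); [by_hyp|].
    apply (derives_iff_mpr _ _ a'); [do 2 apply derives_cons; exact Ha | by_hyp].
  - apply (derives_iff_mpr _ _ b'); [do 2 apply derives_cons; exact Hb|].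
    apply (der_MP _ _ a'); [by_hyp|].
    apply (derives_iff_mp _ a); [do 2 apply derives_cons; exact Ha | by_hyp].
Qed.

Lemma derives_subst_iff G s1 s2 f :
  (forall p, derives T G (Iff (s1 p) (s2 p))) ->
  derives T G (Iff (subst s1 f) (subst s2 f)).
Proof.
  intros Hs; induction f; simpl;
    auto using derives_iff_refl, derives_and_iff, derives_or_iff, derives_imp_iff.
Qed.

Lemma derives_subst_iff_self G s f :
  (forall p, derives T G (Iff (s p) (Var p))) -> derives T G (Iff (subst s f) f).
Proof. intros Hs; rewrite <- (subst_Var f) at 2; apply derives_subst_iff, Hs. Qed.

Lemma derives_neg_iff G a b : derives T G (Iff a b) -> derives T G (Neg b) -> derives T G (Neg a).
Proof.
  intros Hab Hb; imp_intro.
  apply (der_MP _ _ b); [apply derives_cons, Hb|].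
  apply (derives_iff_mp _ a); [apply derives_cons, Hab | by_hyp].
Qed.

Lemma derives_dneg_mono G a b :
  derives T G (Imp a b) -> derives T G (Imp (Neg (Neg a)) (Neg (Neg b))).
Proof.
  intros Hab; do 2 imp_intro.
  apply (der_MP _ _ (Neg a)); [by_hyp|]; imp_intro.
  apply (der_MP _ _ b); [by_hyp|].
  apply (der_MP _ _ a); [do 3 apply derives_cons; exact Hab | by_hyp].
Qed.

Lemma derives_stable_intro G a : derives T (Neg (Neg a) :: G) a -> derives T G (stab a).
Proof.
  intros H; apply derives_iff_intro; [|exact H].
  imp_intro; apply (der_MP _ _ a); by_hyp.
Qed.

Lemma derives_stable_bot G : derives T G (stab Bot).
Proof. apply derives_stable_intro; apply (der_MP _ _ (Neg Bot)); [by_hyp | imp_intro; by_hyp]. Qed.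

Lemma derives_stable_top G : derives T G (stab Top).
Proof. apply derives_stable_intro, derives_top. Qed.

Lemma derives_stable_and G a b :
  derives T G (stab a) -> derives T G (stab b) -> derives T G (stab (And a b)).
Proof.
  intros Ha Hb; apply derives_stable_intro, derives_and_intro.
  - apply (derives_iff_mpr _ _ _ (derives_cons _ _ _ Ha)).
    apply (der_MP _ _ (Neg (Neg (And a b)))); [|by_hyp].
    apply derives_dneg_mono, derives_IPC, ipc_A1.
  - apply (derives_iff_mpr _ _ _ (derives_cons _ _ _ Hb)).
    apply (der_MP _ _ (Neg (Neg (And a b)))); [|by_hyp].
    apply derives_dneg_mono, derives_IPC, ipc_A2.
Qed.

Lemma derives_stable_imp G a b : derives T G (stab b) -> derives T G (stab (Imp a b)).
Proof.
  intros Hb; apply derives_stable_intro; imp_intro.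
  apply (derives_iff_mpr _ _ _ (derives_cons _ _ _ (derives_cons _ _ _ Hb))).
  apply (der_MP _ _ (Neg (Neg (Imp a b)))); [|by_hyp].
  apply derives_dneg_mono; imp_intro; apply (der_MP _ _ a); by_hyp.
Qed.

Lemma derives_stable_iff G a b :
  derives T G (Iff a b) -> derives T G (stab a) -> derives T G (stab b).
Proof.
  intros Hab Ha; apply derives_stable_intro.
  apply (derives_iff_mp _ a); [apply derives_cons, Hab|].
  apply (derives_iff_mpr _ _ _ (derives_cons _ _ _ Ha)).
  apply (der_MP _ _ (Neg (Neg b))); [|by_hyp].
  apply derives_dneg_mono, derives_cons, derives_and_elim2 with (a := Imp a b), Hab.
Qed.

Lemma derives_stable_cases G a b :
  derives T G (stab b) -> derives T (a :: G) b -> derives T (Neg a :: G) b -> derives T G b.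
Proof.
  intros Hb Ha Hna; apply (derives_iff_mpr _ _ _ Hb); imp_intro.
  apply (der_MP _ _ b); [by_hyp|].
  apply (der_MP _ _ (Neg a)); [apply derives_cons; imp_intro; exact Hna|].
  imp_intro; apply (der_MP _ _ b); [by_hyp|].
  revert Ha; apply derives_weaken; intros x [<- | Hx]; simpl; auto.
Qed.

Lemma derives_dneg_hyp phi a b :
  derives T [] (stab b) -> derives T [phi; a] b -> derives T [a; Neg (Neg phi)] b.
Proof.
  intros Hb H; apply (derives_iff_mpr _ _ _ (derives_of_nil _ _ Hb)).
  apply (der_MP _ _ (Neg (Neg phi))); [|by_hyp].
  apply derives_dneg_mono, (derives_weaken T [a]); [intros x [<- | []]; left; reflexivity|].
  imp_intro; exact H.
Qed.

Lemma derives_stable_of_projective phi s :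
  (forall p, T (stab (Var p))) -> (forall p, T (stab (s p))) -> T (subst s phi) ->
  (forall p, derives T [phi; s p] (Var p)) -> (forall p, derives T [phi; Var p] (s p)) ->
  derives T [] (stab phi).
Proof.
  intros Hvar Hs Hsphi Helim Hintro; apply derives_stable_intro.
  apply (derives_iff_mp _ (subst s phi)); [|apply der_thm, Hsphi].
  apply derives_subst_iff_self; intros p.
  apply derives_iff_intro; apply derives_dneg_hyp; auto using der_thm.
Qed.

Definition val_subst (v : nat -> bool) (p : nat) : form := if v p then Top else Bot.

Lemma derives_val_subst G v f :
  derives T G (if eval v f then subst (val_subst v) f else Neg (subst (val_subst v) f)).
Proof.
  induction f; simpl.
  - unfold val_subst; destruct (v n); [apply derives_top | imp_intro; by_hyp].
  - imp_intro; by_hyp.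
  - apply derives_top.
  - destruct (eval v f1), (eval v f2); simpl.
    + apply derives_and_intro; assumption.
    + imp_intro; apply (der_MP _ _ (subst (val_subst v) f2)); [apply derives_cons, IHf2|].
      eapply derives_and_elim2; by_hyp.
    + imp_intro; apply (der_MP _ _ (subst (val_subst v) f1)); [apply derives_cons, IHf1|].
      eapply derives_and_elim1; by_hyp.
    + imp_intro; apply (der_MP _ _ (subst (val_subst v) f1)); [apply derives_cons, IHf1|].
      eapply derives_and_elim1; by_hyp.
  - destruct (eval v f1), (eval v f2); simpl.
    + apply derives_or_intro1; assumption.
    + apply derives_or_intro1; assumption.
    + apply derives_or_intro2; assumption.
    + imp_intro; eapply derives_or_elim; [by_hyp | |].
      * apply (der_MP _ _ (subst (val_subst v) f1)); [do 2 apply derives_cons; exact IHf1 | by_hyp].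
      * apply (der_MP _ _ (subst (val_subst v) f2)); [do 2 apply derives_cons; exact IHf2 | by_hyp].
  - destruct (eval v f1), (eval v f2); simpl.
    + imp_intro; apply derives_cons, IHf2.
    + imp_intro; apply (der_MP _ _ (subst (val_subst v) f2)); [apply derives_cons, IHf2|].
      apply (der_MP _ _ (subst (val_subst v) f1)); [by_hyp | apply derives_cons, IHf1].
    + imp_intro; apply derives_bot_elim.
      apply (der_MP _ _ (subst (val_subst v) f1)); [apply derives_cons, IHf1 | by_hyp].
    + imp_intro; apply derives_bot_elim.
      apply (der_MP _ _ (subst (val_subst v) f1)); [apply derives_cons, IHf1 | by_hyp].
Qed.

Definition partial_val_subst (n : nat) (v : nat -> bool) (p : nat) : form :=
  if p <? n then Var p else val_subst v p.

Definition update (v : nat -> bool) (n : nat) (b : bool) (p : nat) : bool :=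
  if p =? n then b else v p.

Lemma partial_val_subst_succ n v (b : bool) p :
  derives T [(if b then Var n else Neg (Var n))]
    (Iff (partial_val_subst (S n) v p) (partial_val_subst n (update v n b) p)).
Proof.
  unfold partial_val_subst, update, val_subst.
  destruct (Nat.ltb_spec p (S n)), (Nat.ltb_spec p n), (Nat.eqb_spec p n);
    subst; try lia; try apply derives_iff_refl.
  destruct b; apply derives_iff_intro.
  - apply derives_top.
  - by_hyp.
  - apply (der_MP _ _ (Var n)); by_hyp.
  - apply derives_bot_elim; by_hyp.
Qed.

Lemma derives_neg_partial_val_subst f :
  (forall w, eval w f = false) ->
  forall n v, derives T [] (Neg (subst (partial_val_subst n v) f)).
Proof.
  intros Hf n; induction n as [|n IH]; intros v.
  - rewrite (subst_ext _ (val_subst v)) by reflexivity.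
    generalize (derives_val_subst [] v f); rewrite Hf; exact id.
  - assert (Hcase : forall b : bool, derives T [(if b then Var n else Neg (Var n))]
                                (Neg (subst (partial_val_subst (S n) v) f))).
    { intros b; apply (derives_neg_iff _ _ (subst (partial_val_subst n (update v n b)) f)).
      - apply derives_subst_iff; intros p; apply partial_val_subst_succ.
      - apply derives_of_nil, IH. }
    apply (derives_stable_cases _ (Var n)); [|apply (Hcase true) | apply (Hcase false)].
    apply derives_stable_imp, derives_stable_bot.
Qed.

Lemma derives_neg_of_unsat f : (forall w, eval w f = false) -> derives T [] (Neg f).
Proof.
  intros Hf.
  pose proof (derives_neg_partial_val_subst f Hf (var_bound f) (fun _ => true)) as H.
  rewrite subst_id_below in H; [exact H|].
  intros p Hp; unfold partial_val_subst; apply Nat.ltb_lt in Hp; rewrite Hp; reflexivity.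
Qed.

Lemma satisfiable_of_consistent f : ~ derives T [f] Bot -> exists v, eval v f = true.
Proof.
  intros Hf; apply NNPP; intros Hsat; apply Hf.
  apply (der_MP _ _ f); [apply derives_of_nil, derives_neg_of_unsat | by_hyp].
  intros w; destruct (eval w f) eqn:E; [exfalso; eauto | reflexivity].
Qed.

Definition lowenheim_subst (phi : form) (v : nat -> bool) (p : nat) : form :=
  And (Imp phi (Var p)) (Imp (Neg phi) (val_subst v p)).

Lemma lowenheim_var_iff phi v p : derives T [phi] (Iff (lowenheim_subst phi v p) (Var p)).
Proof.
  unfold lowenheim_subst; apply derives_iff_intro.
  - apply (der_MP _ _ phi); [eapply derives_and_elim1; by_hyp | by_hyp].
  - apply derives_and_intro; imp_intro; [by_hyp|].
    apply derives_bot_elim, (der_MP _ _ phi); by_hyp.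
Qed.

Lemma lowenheim_val_iff phi v p :
  derives T [Neg phi] (Iff (lowenheim_subst phi v p) (val_subst v p)).
Proof.
  unfold lowenheim_subst; apply derives_iff_intro.
  - apply (der_MP _ _ (Neg phi)); [eapply derives_and_elim2; by_hyp | by_hyp].
  - apply derives_and_intro; imp_intro; [|by_hyp].
    apply derives_bot_elim, (der_MP _ _ phi); by_hyp.
Qed.

Lemma lowenheim_stable phi v p :
  T (stab (Var p)) -> derives T [] (stab (lowenheim_subst phi v p)).
Proof.
  intros Hp; apply derives_stable_and; apply derives_stable_imp; [apply der_thm, Hp|].
  unfold val_subst; destruct (v p); [apply derives_stable_top | apply derives_stable_bot].
Qed.

Lemma lowenheim_unifies phi v :
  eval v phi = true ->
  derives T [] (stab (subst (lowenheim_subst phi v) phi)) ->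
  derives T [] (subst (lowenheim_subst phi v) phi).
Proof.
  intros Hv Hstab; apply (derives_stable_cases _ phi _ Hstab).
  - apply (derives_iff_mpr _ _ phi); [|by_hyp].
    apply derives_subst_iff_self, lowenheim_var_iff.
  - apply (derives_iff_mpr _ _ (subst (val_subst v) phi)).
    + apply derives_subst_iff, lowenheim_val_iff.
    + generalize (derives_val_subst [Neg phi] v phi); rewrite Hv; exact id.
Qed.

End Derivations.

Lemma Lneg_IPC L : intermediate_logic L -> forall f, IPC f -> Lneg L f.
Proof. intros [[_ [HI _]] _] f H; apply HI, IPC_subst, H. Qed.

Lemma Lneg_MP_closed L : intermediate_logic L -> MP_closed (Lneg L).
Proof. intros [[HM _] _] a b; apply HM. Qed.

Lemma Lneg_var_stable L : intermediate_logic L -> forall p, Lneg L (stab (Var p)).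
Proof.
  intros [[HM [HI _]] _] p; unfold Lneg, negsub; simpl.
  apply (derives_nil_mem L _ HM), (derives_stable_imp L HI), (derives_stable_bot L HI).
Qed.

Lemma Lneg_stable_subst L phi s :
  intermediate_logic L -> Lneg L (stab phi) -> stable L s -> Lneg L (stab (subst s phi)).
Proof.
  intros [[HM [HI _]] Hsubst] Hphi Hs; unfold stable, Lneg, negsub in *; simpl in *.
  rewrite subst_subst.
  set (N := fun p => subst (fun q => Neg (Var q)) (s p)).
  pose proof (Hsubst (fun p => Neg (N p)) _ Hphi) as H; simpl in H.
  rewrite subst_subst in H; simpl in H.
  apply (derives_nil_mem L _ HM).
  apply (derives_stable_iff L HI _ (subst (fun p => Neg (Neg (N p))) phi)); [|apply der_thm, H].
  apply (derives_subst_iff L HI); intros p.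
  apply (derives_iff_sym L HI), der_thm, Hs.
Qed.

Theorem lemma4p7 (L : form -> Prop) :
  intermediate_logic L ->
  (forall f, ND f -> L f) ->
  forall phi : form, consistent L phi ->
  (Lneg L (Iff phi (Neg (Neg phi))) <-> projective L (stable L) phi).
Proof.
  intros HL _ phi Hcons.
  pose proof (Lneg_IPC L HL) as HI.
  pose proof (Lneg_MP_closed L HL) as HM.
  pose proof (Lneg_var_stable L HL) as Hvar.
  split.
  - intros Hphi.
    destruct (satisfiable_of_consistent (Lneg L) HI phi Hcons) as [v Hv].
    assert (Hs : stable L (lowenheim_subst phi v)).
    { intros p; apply (derives_nil_mem _ _ HM), lowenheim_stable; auto. }
    exists (lowenheim_subst phi v); repeat split; intros; auto.
    + apply (derives_nil_mem _ _ HM), lowenheim_unifies; auto.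
      apply der_thm, Lneg_stable_subst; auto.
    + apply derives_iff_hyp_mp, lowenheim_var_iff; auto.
    + apply derives_iff_hyp_mpr, lowenheim_var_iff; auto.
  - intros (s & Hs & Hsphi & Helim & Hintro).
    apply (derives_nil_mem _ _ HM), (derives_stable_of_projective _ HI phi s); auto.
Qed.
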